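(* For a comical set $X$, the homotopy $1$-category $\mathrm{ho}_1X$ — whose objects are the $0$-cubes of $X$, whose morphisms from $x$ to $y$ are the homotopy classes of $1$-cubes from $x$ to $y$, whose composition sends $([f],[g])$ to the class of any composite of $f$ and $g$, and whose identity at $x$ is $[x\sigma_1]$ — is a well-defined category (composition is well defined, unital and associative).
   Context: Cubical sets are presheaves on the box category $\square$ (objects $[1]^n=\{0<1\}^n$; morphisms generated by faces $\partial_{i,\varepsilon}$ inserting $\varepsilon$ as $i$-th coordinate, degeneracies $\sigma_i$ deleting the $i$-th coordinate, and max/min connections $\gamma_{i,1},\gamma_{i,0}$); operators act on the right, so for a $0$-cube $x$, $x\sigma_1$ is the degenerate $1$-cube at $x$. A cube is degenerate if it is $x\sigma_i$ or $x\gamma_{i,\varepsilon}$; composites of faces have unique normal forms $\partial_{k_1,\varepsilon_1}\cdots\partial_{k_t,\varepsilon_t}$, $k_1>\dots>k_t$. A marked cubical set is a cubical set with marked cubes of positive dimension containing all degenerate cubes. $\tau_jX$ is $X$ with all cubes of dimension $\ge j+1$ marked. $\square^n_{k,\varepsilon}$ ($n\ge1$, $1\le k\le n$) is $\square^n$ in which a non-degenerate positive-dimensional face in normal form is marked iff none of its factors is $\partial_{k-1,\varepsilon},\partial_{k,0},\partial_{k,1},\partial_{k+1,\varepsilon}$; $\sqcap^n_{k,\varepsilon}$ is the union of codimension-one faces except $\partial_{k,\varepsilon}$, regularly marked; for $n\ge2$, $(\square^n_{k,\varepsilon})''=\tau_{n-2}\square^n_{k,\varepsilon}$ and $(\square^n_{k,\varepsilon})'$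 is $\square^n_{k,\varepsilon}$ with all $(n-1)$-faces other than $\partial_{k,\varepsilon}$ marked. A comical set is a marked cubical set with the right lifting property against all $\sqcap^n_{k,\varepsilon}\hookrightarrow\square^n_{k,\varepsilon}$ and $(\square^n_{k,\varepsilon})'\hookrightarrow(\square^n_{k,\varepsilon})''$. A $1$-cube $f$ goes from $x=f\partial_{1,0}$ to $y=f\partial_{1,1}$. Write a $2$-cube $s$ via its faces $(s\partial_{1,0},s\partial_{1,1},s\partial_{2,0},s\partial_{2,1})$. For $1$-cubes $f,g$ from $x$ to $y$, $f\sim g$ (homotopic) means there is a marked $2$-cube with faces $(g,y\sigma_1,f,y\sigma_1)$; in a comical set this is an equivalence relation, and $[f]$ denotes the class. Given $f$ from $x$ to $y$ and $g$ from $y$ to $z$, a composite of $f$ and $g$ is a $1$-cube $a$, $b$, $c$ or $d$ for which there exists a marked $2$-cube with faces $(a,g,f,z\sigma_1)$, $(f,b,x\sigma_1,g)$, $(f,z\sigma_1,c,g)$ or $(x\sigma_1,g,f,d)$ respectively; in a comical set such composites exist. *)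

From mathcomp Require Import all_boot.
From Stdlib Require Import ProofIrrelevance.

Set Implicit Arguments.
Unset Strict Implicit.
Unset Printing Implicit Defensive.

(* The box category.  [1]^n is modelled by n-tuples of booleans; a    *)
(* morphism [1]^m -> [1]^n of the box category is a (finite) function *)
(* cube m -> cube n lying in the subcategory generated by faces,      *)
(* degeneracies and connections.  Indices i are 1-based as in the     *)
(* paper.                                                             *)

Notation cube n := (n.-tuple bool).

Definition fid n : {ffun cube n -> cube n} := [ffun x => x].
Definition fcomp m n p (g : {ffun cube n -> cube p}) (f : {ffun cube m -> cube n})
  : {ffun cube m -> cube p} := [ffun x => g (f x)].

Definition face_at n (i : nat) (e : bool) (x : cube n) (j : nat) : bool :=
  if j < i.-1 then nth false x j else if j == i.-1 then e else nth false x j.-1.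
Definition face n (i : nat) (e : bool) : {ffun cube n -> cube n.+1} :=
  [ffun x : cube n => [tuple face_at i e x j | j < n.+1]].

Definition deg_at n (i : nat) (x : cube n.+1) (j : nat) : bool :=
  if j < i.-1 then nth false x j else nth false x j.+1.
Definition deg n (i : nat) : {ffun cube n.+1 -> cube n} :=
  [ffun x : cube n.+1 => [tuple deg_at i x j | j < n]].

(* connection g_{i,e} : [1]^(n+2) -> [1]^(n+1): max (e = true) or
   min (e = false) of the i-th and (i+1)-st coordinates *)
Definition conn_at n (i : nat) (e : bool) (x : cube n.+2) (j : nat) : bool :=
  if j < i.-1 then nth false x j
  else if j == i.-1 then
    (if e then nth false x j || nth false x j.+1
     else nth false x j && nth false x j.+1)
  else nth false x j.+1.
Definition conn n (i : nat) (e : bool) : {ffun cube n.+2 -> cube n.+1} :=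
  [ffun x : cube n.+2 => [tuple conn_at i e x j | j < n.+1]].

Inductive is_box : forall m n, {ffun cube m -> cube n} -> Prop :=
| box_id n : is_box (fid n)
| box_face n i e : 0 < i <= n.+1 -> is_box (face n i e)
| box_deg n i : 0 < i <= n.+1 -> is_box (deg n i)
| box_conn n i e : 0 < i <= n.+1 -> is_box (conn n i e)
| box_comp m n p (g : {ffun cube n -> cube p}) (f : {ffun cube m -> cube n}) :
    is_box g -> is_box f -> is_box (fcomp g f).

Definition Box m n := {f : {ffun cube m -> cube n} | is_box f}.

Definition bid n : Box n n := exist _ (fid n) (box_id n).
Definition bcomp m n p (g : Box n p) (f : Box m n) : Box m p :=
  exist _ (fcomp (proj1_sig g) (proj1_sig f))
          (box_comp (proj2_sig g) (proj2_sig f)).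

Lemma box_eq m n (f g : Box m n) : proj1_sig f = proj1_sig g -> f = g.
Proof.
case: f => f pf; case: g => g pg /= E; subst g.
by rewrite (proof_irrelevance _ pf pg).
Qed.

Lemma fcompA m n p q (h : {ffun cube p -> cube q}) (g : {ffun cube n -> cube p})
  (f : {ffun cube m -> cube n}) : fcomp h (fcomp g f) = fcomp (fcomp h g) f.
Proof. by apply/ffunP => x; rewrite !ffunE. Qed.

Lemma bcompA m n p q (h : Box p q) (g : Box n p) (f : Box m n) :
  bcomp h (bcomp g f) = bcomp (bcomp h g) f.
Proof. by apply: box_eq; rewrite /= fcompA. Qed.

Lemma bcomp1 m n (f : Box m n) : bcomp f (bid m) = f.
Proof. by apply: box_eq; apply/ffunP => x; rewrite /= !ffunE. Qed.

Lemma bcom1 m n (f : Box m n) : bcomp (bid n) f = f.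
Proof. by apply: box_eq; apply/ffunP => x; rewrite /= !ffunE. Qed.

(* Cubical sets: presheaves on the box category, operators acting on  *)
(* the right:  act f x = x f.                                         *)

Record cset := CSet {
  cs :> nat -> Type;
  act : forall m n, Box m n -> cs n -> cs m;
  act_id : forall n (x : cs n), act (bid n) x = x;
  act_comp : forall m n p (g : Box n p) (f : Box m n) (x : cs p),
      act (bcomp g f) x = act f (act g x)
}.
Arguments act {c m n} f x.

Inductive degen_gen : forall n m, {ffun cube n -> cube m} -> Prop :=
| dg_deg n i : 0 < i <= n.+1 -> degen_gen (deg n i)
| dg_conn n i e : 0 < i <= n.+1 -> degen_gen (conn n i e).

Definition degenerate (X : cset) n (x : X n) : Prop :=
  exists m (f : Box n m) (y : X m), degen_gen (proj1_sig f) /\ x = act f y.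

Lemma degen_gen_pos n m (g : {ffun cube n -> cube m}) : degen_gen g -> 0 < n.
Proof. by case. Qed.

Lemma degenerate_pos (X : cset) n (x : X n) : degenerate x -> 0 < n.
Proof. by case=> m [f [y [H _]]]; exact: degen_gen_pos H. Qed.

Record mcset := MCSet {
  mcs :> cset;
  marked : forall n, mcs n -> Prop;
  marked_pos : forall x : mcs 0, ~ marked x;
  marked_degen : forall n (x : mcs n), degenerate x -> marked x
}.
Arguments marked {m n} x.

Record mmap (A X : mcset) := MMap {
  mfun :> forall n, A n -> X n;
  mnat : forall m n (f : Box m n) (x : A n), mfun (act f x) = act f (mfun x);
  mmark : forall n (x : A n), marked x -> marked (mfun x)
}.

Definition rlp (A B : mcset) (i : mmap A B) (X : mcset) : Prop :=
  forall f : mmap A X, exists g : mmap B X, forall n (a : A n), g n (i n a) = f n a.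

Definition rep_act n m p (f : Box m p) (x : Box p n) : Box m n := bcomp x f.

Lemma rep_act_id n p (x : Box p n) : rep_act (bid p) x = x.
Proof. exact: bcomp1. Qed.

Lemma rep_act_comp n m p q (g : Box p q) (f : Box m p) (x : Box q n) :
  rep_act (bcomp g f) x = rep_act f (rep_act g x).
Proof. by rewrite /rep_act bcompA. Qed.

Definition Rep n : cset := @CSet (fun m => Box m n) (@rep_act n)
  (@rep_act_id n) (@rep_act_comp n).

(* Faces in normal form d_{k1,e1} ... d_{kt,et}, k1 > ... > kt, given as
   words [:: (k1,e1); ...; (kt,et)].  The factor d_{kt,et} is applied
   first. *)
Definition ins (s : seq bool) (i : nat) (e : bool) : seq bool :=
  take i.-1 s ++ e :: drop i.-1 s.

Definition apply_word (w : seq (nat * bool)) (s : seq bool) : seq bool :=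
  foldr (fun a s => ins s a.1 a.2) s w.

Definition is_face_word m n (phi : Box m n) (w : seq (nat * bool)) : Prop :=
  [/\ size w + m = n,
      sorted (fun a b : nat * bool => b.1 < a.1) w,
      all (fun a : nat * bool => 0 < a.1 <= n) w
    & forall x : cube m, tval (proj1_sig phi x) = apply_word w (tval x)].

Definition allowed (k : nat) (e : bool) (a : nat * bool) : bool :=
  ~~ [|| (a.1 == k.-1) && (a.2 == e), a.1 == k | (a.1 == k.+1) && (a.2 == e)].

Definition marked_box n k e m (phi : Box m n) : Prop :=
  @degenerate (Rep n) m phi \/
  (0 < m /\ exists w, is_face_word phi w /\ all (allowed k e) w).

Lemma marked_box_pos n k e (phi : Box 0 n) : ~ marked_box k e phi.
Proof. by case=> [/degenerate_pos|[]]. Qed.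

Definition BoxM n k e : mcset :=
  @MCSet (Rep n) (@marked_box n k e) (@marked_box_pos n k e)
    (fun m phi H => or_introl H).

Definition marked_box' n k e m (phi : Box m n) : Prop :=
  marked_box k e phi \/
  (0 < m /\ m.+1 = n /\
   exists i d, is_face_word phi [:: (i, d)] /\ ~ (i = k /\ d = e)).

Lemma marked_box'_pos n k e (phi : Box 0 n) : ~ marked_box' k e phi.
Proof. by case=> [/marked_box_pos|[]]. Qed.

Definition BoxM' n k e : mcset :=
  @MCSet (Rep n) (@marked_box' n k e) (@marked_box'_pos n k e)
    (fun m phi H => or_introl (or_introl H)).

Definition marked_box'' n k e m (phi : Box m n) : Prop :=
  marked_box k e phi \/ (0 < m /\ n.-1 <= m).

Lemma marked_box''_pos n k e (phi : Box 0 n) : ~ marked_box'' k e phi.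
Proof. by case=> [/marked_box_pos|[]]. Qed.

Definition BoxM'' n k e : mcset :=
  @MCSet (Rep n) (@marked_box'' n k e) (@marked_box''_pos n k e)
    (fun m phi H => or_introl (or_introl H)).

Lemma prime_mark n k e m (phi : Box m n) :
  marked_box' k e phi -> marked_box'' k e phi.
Proof.
case=> [H|[H1 [H2 _]]]; [by left | right; split => //].
by rewrite -H2.
Qed.

Definition prime_incl n k e : mmap (BoxM' n k e) (BoxM'' n k e) :=
  @MMap (BoxM' n k e) (BoxM'' n k e) (fun m x => x)
    (fun m p f x => erefl) (@prime_mark n k e).

(* The open box sqcap^{n'+1}_{k,e}: union of the codimension-one faces *)
(* d_{i,d}, (i,d) <> (k,e), of box^{n'+1}, with the marking inherited  *)
(* from box^{n'+1}_{k,e}.                                              *)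

Definition in_obox n' k e m (phi : Box m n'.+1) : Prop :=
  exists i d (psi : Box m n'), [/\ 0 < i <= n'.+1, ~ (i = k /\ d = e)
     & proj1_sig phi = fcomp (face n' i d) (proj1_sig psi)].

Lemma in_obox_act n' k e m p (f : Box m p) (phi : Box p n'.+1) :
  in_obox k e phi -> in_obox k e (bcomp phi f).
Proof.
case=> i [d [psi [Hi Hn E]]]; exists i, d, (bcomp psi f); split => //=.
by rewrite E fcompA.
Qed.

Definition obox_cs n' k e (m : nat) := {phi : Box m n'.+1 | in_obox k e phi}.

Definition obox_act n' k e m p (f : Box m p) (x : obox_cs n' k e p) :
  obox_cs n' k e m :=
  exist _ (bcomp (proj1_sig x) f) (in_obox_act f (proj2_sig x)).

Lemma obox_eq n' k e m (x y : obox_cs n' k e m) :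
  proj1_sig x = proj1_sig y -> x = y.
Proof.
case: x => x px; case: y => y py /= E; subst y.
by rewrite (proof_irrelevance _ px py).
Qed.

Lemma obox_act_id n' k e p (x : obox_cs n' k e p) : obox_act (bid p) x = x.
Proof. by apply: obox_eq; rewrite /= bcomp1. Qed.

Lemma obox_act_comp n' k e m p q (g : Box p q) (f : Box m p)
  (x : obox_cs n' k e q) :
  obox_act (bcomp g f) x = obox_act f (obox_act g x).
Proof. by apply: obox_eq; rewrite /= bcompA. Qed.

Definition OBoxC n' k e : cset :=
  @CSet (@obox_cs n' k e) (@obox_act n' k e)
    (@obox_act_id n' k e) (@obox_act_comp n' k e).

Definition marked_obox n' k e m (x : OBoxC n' k e m) : Prop :=
  marked_box k e (proj1_sig x).

Lemma marked_obox_pos n' k e (x : OBoxC n' k e 0) : ~ marked_obox x.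
Proof. exact: marked_box_pos. Qed.

Lemma marked_obox_degen n' k e m (x : OBoxC n' k e m) :
  degenerate x -> marked_obox x.
Proof.
case=> p [f [y [H E]]]; left; exists p, f, (proj1_sig y); split => //.
by rewrite E.
Qed.

Definition OBox n' k e : mcset :=
  @MCSet (OBoxC n' k e) (@marked_obox n' k e)
    (@marked_obox_pos n' k e) (@marked_obox_degen n' k e).

Definition obox_incl n' k e : mmap (OBox n' k e) (BoxM n'.+1 k e) :=
  @MMap (OBox n' k e) (BoxM n'.+1 k e) (fun m x => proj1_sig x)
    (fun m p f x => erefl) (fun m x H => H).

(* Comical sets: RLP against sqcap^n_{k,e} -> box^n_{k,e} (n >= 1,
   written n = n'+1) and (box^n_{k,e})' -> (box^n_{k,e})'' (n >= 2). *)
Definition comical (X : mcset) : Prop :=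
  (forall n' k e, 0 < k <= n'.+1 -> rlp (obox_incl n' k e) X) /\
  (forall n k e, 2 <= n -> 0 < k <= n -> rlp (prime_incl n k e) X).

Definition bface n i e (H : 0 < i <= n.+1) : Box n n.+1 :=
  exist _ (face n i e) (box_face e H).

Definition d1 (e : bool) : Box 0 1 := @bface 0 1 e isT.
Definition d21 (e : bool) : Box 1 2 := @bface 1 1 e isT.
Definition d22 (e : bool) : Box 1 2 := @bface 1 2 e isT.
Definition s1 : Box 1 0 := exist _ (deg 0 1) (@box_deg 0 1 isT).

Section Low.
Variable X : mcset.

Definition hom1 (x y : X 0) (f : X 1) : Prop :=
  act (d1 false) f = x /\ act (d1 true) f = y.

Definition idc (x : X 0) : X 1 := act s1 x.

Definition marked_sq (a b c d : X 1) : Prop :=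
  exists s : X 2, marked s /\
    [/\ act (d21 false) s = a, act (d21 true) s = b,
        act (d22 false) s = c & act (d22 true) s = d].

Definition homotopic (y : X 0) (f g : X 1) : Prop :=
  marked_sq g (idc y) f (idc y).

Definition is_composite (x z : X 0) (f g a : X 1) : Prop :=
  marked_sq a g f (idc z) \/ marked_sq f a (idc x) g \/
  marked_sq f (idc z) a g \/ marked_sq (idc x) g f a.

End Low.

From mathcomp Require Import all_boot zify.
From Stdlib Require Import ClassicalEpsilon.
Set Warnings "-notation-overridden".
Set Implicit Arguments. Unset Strict Implicit. Unset Printing Implicit Defensive.

(* Everything rests on one geometric fact, the 3-cube lemma
   [cube3_missing_face]: if five faces of a 3-cube are given as marked
   squares agreeing along their common edges, and the edges are marked
   where the marking of box^3_{k,e} requires it, then the sixth face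
   (k,e) exists as a marked square with the induced boundary.  It is
   proved by gluing the five squares into a map out of the open box
   sqcap^3_{k,e} ([glue_map]), filling it by the first lifting property
   ([open_box_filler]), and marking the missing face by the second
   lifting property (box^3_{k,e})' -> (box^3_{k,e})''
   ([missing_face_marked]).  The gluing is done for open boxes of any
   dimension; only the verification of markings is specialised to low
   dimension, where faces in normal form have at most two factors.

   Feeding degenerate squares (degeneracies and the max-connection of a
   1-cube) into the 3-cube lemma yields uniqueness of composites up to
   homotopy, conversion of the four kinds of composites into one normal
   kind, and associativity of the normal kind;
   existence of normal composites is a filler of a 2-dimensional open box. *)

Lemma nth_tuple_of n (F : nat -> bool) k :
  nth false (tval [tuple F (nat_of_ord j) | j < n]) k = if k < n then F k else false.
Proof.
case: ltnP => H; first by rewrite (nth_mktuple _ _ (Ordinal H)).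
by rewrite nth_default // size_tuple.
Qed.

Lemma cube_ext n (s t : cube n) :
  (forall k, k < n -> nth false s k = nth false t k) -> s = t.
Proof.
by move=> H; apply/val_inj/(eq_from_nth (x0:=false)); rewrite ?size_tuple.
Qed.

Lemma nth_face n i e (x : cube n) k :
  nth false (face n i e x) k = if k < n.+1 then face_at i e x k else false.
Proof. by rewrite ffunE nth_tuple_of. Qed.

Lemma nth_deg n i (x : cube n.+1) k :
  nth false (deg n i x) k = if k < n then deg_at i x k else false.
Proof. by rewrite ffunE nth_tuple_of. Qed.

Lemma nth_conn n i e (x : cube n.+2) k :
  nth false (conn n i e x) k = if k < n.+1 then conn_at i e x k else false.
Proof. by rewrite ffunE nth_tuple_of. Qed.

Lemma fcompE m n p (g : {ffun cube n -> cube p}) (f : {ffun cube m -> cube n}) x :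
  fcomp g f x = g (f x).
Proof. by rewrite ffunE. Qed.

Lemma fidE n (x : cube n) : fid n x = x.
Proof. by rewrite ffunE. Qed.

Lemma nth_face_in n i d (u : cube n) k : k < n.+1 ->
  nth false (face n i d u) k =
  if k < i.-1 then nth false u k else if k == i.-1 then d else nth false u k.-1.
Proof. by move=> H; rewrite nth_face H. Qed.

Lemma nth_deg_in n i (y : cube n.+1) k : k < n ->
  nth false (deg n i y) k = if k < i.-1 then nth false y k else nth false y k.+1.
Proof. by move=> H; rewrite nth_deg H. Qed.

Lemma nth_face_at n i d (u : cube n) : 0 < i <= n.+1 ->
  nth false (face n i d u) i.-1 = d.
Proof. by move=> Hi; rewrite nth_face_in; [rewrite ifF ?eqxx //; lia | lia]. Qed.

Lemma deg_face n i d (u : cube n) : deg n i (face n i d u) = u.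
Proof.
apply: cube_ext => k Hk; rewrite nth_deg_in //.
case: ifP => H1; rewrite nth_face_in //; try lia; first by rewrite H1.
by rewrite ifF; [rewrite ifF //; lia | lia].
Qed.

Lemma face_deg n i d (y : cube n.+1) : 0 < i <= n.+1 -> nth false y i.-1 = d ->
  face n i d (deg n i y) = y.
Proof.
move=> Hi Hy; apply: cube_ext => k Hk; rewrite nth_face_in //.
case: ifP => H1; first by rewrite nth_deg_in //; [rewrite H1 | lia].
case: ifP => H2; first by move/eqP: H2 => ->.
rewrite nth_deg_in; last lia.
by rewrite ifF; [congr nth; lia | lia].
Qed.

Lemma deg_deg n i j (y : cube n.+2) : 0 < i < j ->
  deg n i (deg n.+1 j y) = deg n j.-1 (deg n.+1 i y).
Proof.
move=> Hij; apply: cube_ext => k Hk.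
rewrite nth_deg_in // [in RHS]nth_deg_in //.
by case: ifP => H1; rewrite nth_deg_in; try lia; case: ifP => H2;
  rewrite ?nth_deg_in; try lia; repeat case: ifP => ?; lia.
Qed.

Lemma deg_face_lt n i j d (v : cube n.+1) : 0 < i < j -> j <= n.+2 ->
  deg n.+1 i (face n.+1 j d v) = face n j.-1 d (deg n i v).
Proof.
move=> Hij Hj; apply: cube_ext => k Hk.
rewrite !(nth_deg, nth_face) /deg_at /face_at !(nth_deg, nth_face) /deg_at /face_at.
by repeat case: ifP => ?; try lia; congr nth; lia.
Qed.

(* Faces and degeneracies at any index, as morphisms of the box category.
   An out-of-range index is harmless: the map then coincides with an
   in-range one. *)

Lemma is_box_face n i d : is_box (face n i d).
Proof.
case: (ltnP n.+1 i) => H.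
  have -> : face n i d = face n n.+1 false.
    apply/ffunP => x; apply: cube_ext => k Hk; rewrite !nth_face Hk /face_at.
    case: ifP => H1; case: ifP => H2 //; try lia.
    case: ifP => H3; try lia.
    by rewrite nth_default // size_tuple; lia.
  by apply: box_face; lia.
case: i H => [|i] H; last by apply: box_face; lia.
by have -> : face n 0 d = face n 1 d by []; apply: box_face.
Qed.

Lemma is_box_deg n i : is_box (deg n i).
Proof.
case: (ltnP n.+1 i) => H.
  have -> : deg n i = deg n n.+1.
    apply/ffunP => x; apply: cube_ext => k Hk; rewrite !nth_deg Hk /deg_at.
    by case: ifP => H1; case: ifP => H2 //; lia.
  by apply: box_deg; lia.
case: i H => [|i] H; last by apply: box_deg; lia.
by have -> : deg n 0 = deg n 1 by []; apply: box_deg.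
Qed.

Definition faceB n i d : Box n n.+1 := exist _ (face n i d) (is_box_face n i d).
Definition degB n i : Box n.+1 n := exist _ (deg n i) (is_box_deg n i).

Lemma act_compE (X : cset) m n p (g : Box n p) (f : Box m n) (x : X p) :
  act f (act g x) = act (bcomp g f) x.
Proof. by rewrite act_comp. Qed.

Lemma act_ext (X : cset) m n (f g : Box m n) (x : X n) :
  proj1_sig f = proj1_sig g -> act f x = act g x.
Proof. by move=> /box_eq ->. Qed.

Lemma act_idE (X : cset) n (f : Box n n) (x : X n) :
  proj1_sig f = fid n -> act f x = x.
Proof. by move=> E; rewrite (act_ext (g := bid n)) ?act_id. Qed.

Lemma marked_act_degen (X : mcset) m p (g : Box m p) (y : X p) :
  degen_gen (proj1_sig g) -> marked (act g y).
Proof. by move=> H; apply: marked_degen; exists p, g, y. Qed.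

(* Decides an identity between composites of faces, degeneracies and
   connections of dimension at most 3 by evaluating both sides everywhere. *)
Ltac box_calc := apply/ffunP; case => -[|[] [|[] [|[] [|? ?]]]] ? //;
  apply: cube_ext;
  let k := fresh "k" in let Hk := fresh "Hk" in
  move=> k Hk; rewrite ?fcompE ?fidE;
  repeat (rewrite ?nth_face ?nth_deg ?nth_conn; unfold face_at, deg_at, conn_at);
  move: k Hk; case=> [|[|[|[|?]]]] //= _;
  try (by repeat match goal with [ b : bool |- _ ] => destruct b end).

Definition const_coord m n (phi : Box m n) i d :=
  forall q, nth false (proj1_sig phi q) i.-1 = d.

Lemma const_coord_uniq m n (phi : Box m n) i d d' :
  const_coord phi i d -> const_coord phi i d' -> d = d'.
Proof. by move=> H1 H2; rewrite -(H1 [tuple false | _ < m]) H2. Qed.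

Lemma const_coord_comp m p n (phi : Box p n) (f : Box m p) i d :
  const_coord phi i d -> const_coord (bcomp phi f) i d.
Proof. by move=> H q /=; rewrite fcompE. Qed.

Lemma in_obox_const_coord n k e m (phi : Box m n.+2) : in_obox k e phi ->
  exists i d, [/\ const_coord phi i d, 0 < i <= n.+2 & (i, d) != (k, e)].
Proof.
case=> i [d [psi [Hi Hne E]]]; exists i, d; split => //.
- by move=> q; rewrite E fcompE nth_face_at.
- by apply/negP => /eqP [H1 H2]; exact: Hne.
Qed.

Lemma face_in_obox n k e i d : 0 < i <= n.+2 -> (i, d) != (k, e) ->
  in_obox k e (faceB n.+1 i d).
Proof.
move=> Hi Hne; exists i, d, (bid n.+1); split => //.
- by move=> [H1 H2]; move: Hne; rewrite H1 H2 eqxx.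
- by apply/ffunP => q /=; rewrite fcompE fidE.
Qed.

Section Glue.
Variables (X : mcset) (n k : nat) (e : bool).
(* the proposed faces x i d of an (n+2)-cube, for (i,d) <> (k,e) *)
Variable x : nat -> bool -> X n.+1.

Definition compatible := forall i j d d', 0 < i -> i < j -> j <= n.+2 ->
  (i, d) != (k, e) -> (j, d') != (k, e) ->
  act (faceB n j.-1 d') (x i d) = act (faceB n i d) (x j d').

(* A cube phi of the open box lies in some face (i,d); as phi = d_{i,d} s_i phi
   it is sent to x_{i,d} (s_i phi).  The default branch is never used. *)
Definition glue_fun m (phi : Box m n.+2) : X m :=
  match [pick p : 'I_n.+2 * bool |
           [forall q, nth false (proj1_sig phi q) p.1 == p.2] &&
           ((p.1.+1, p.2) != (k, e))] with
  | Some p => act (bcomp (degB n.+1 p.1.+1) phi) (x p.1.+1 p.2)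
  | None => act (bcomp (degB n.+1 1) phi) (x 1 false)
  end.

Hypothesis x_compat : compatible.

Lemma glue_wd_lt m (phi : Box m n.+2) i j d d' :
  const_coord phi i d -> const_coord phi j d' -> 0 < i -> i < j -> j <= n.+2 ->
  (i, d) != (k, e) -> (j, d') != (k, e) ->
  act (bcomp (degB n.+1 i) phi) (x i d) = act (bcomp (degB n.+1 j) phi) (x j d').
Proof.
move=> Hi Hj H0 Hij Hjn Hne Hne'.
set chi := bcomp (degB n j.-1) (bcomp (degB n.+1 i) phi).
have E1 : bcomp (degB n.+1 i) phi = bcomp (faceB n j.-1 d') chi.
  apply: box_eq; apply/ffunP => q /=; rewrite !fcompE face_deg //; first lia.
  by rewrite nth_deg_in ?ifF -?(Hj q); [congr nth | ..]; lia.
have E2 : bcomp (degB n.+1 j) phi = bcomp (faceB n i d) chi.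
  apply: box_eq; apply/ffunP => q /=; rewrite !fcompE -deg_deg ?face_deg //;
    try lia.
  by rewrite nth_deg_in ?ifT ?Hi //; lia.
by rewrite E1 E2 -!act_compE x_compat.
Qed.

Lemma glue_wd m (phi : Box m n.+2) i j d d' :
  const_coord phi i d -> const_coord phi j d' -> 0 < i <= n.+2 -> 0 < j <= n.+2 ->
  (i, d) != (k, e) -> (j, d') != (k, e) ->
  act (bcomp (degB n.+1 i) phi) (x i d) = act (bcomp (degB n.+1 j) phi) (x j d').
Proof.
move=> Hi Hj Hib Hjb Hne Hne'.
case: (ltngtP i j) => Hij.
- by apply: glue_wd_lt => //; lia.
- by symmetry; apply: glue_wd_lt => //; lia.
- by subst j; rewrite (const_coord_uniq Hi Hj).
Qed.

Lemma glue_funE m (phi : Box m n.+2) i d :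
  const_coord phi i d -> 0 < i <= n.+2 -> (i, d) != (k, e) ->
  glue_fun phi = act (bcomp (degB n.+1 i) phi) (x i d).
Proof.
move=> Hi Hib Hne; rewrite /glue_fun; case: pickP => [p|].
  case/andP => /forallP Hp Hpne.
  have Hgp : const_coord phi p.1.+1 p.2 by move=> q; apply/eqP: (Hp q).
  by apply: glue_wd => //; have := ltn_ord p.1; lia.
have Hil : i.-1 < n.+2 by lia.
move/(_ (Ordinal Hil, d)) => /=.
have -> : (i.-1).+1 = i by lia.
by rewrite Hne andbT => /forallP []; move=> q; rewrite Hi.
Qed.

Definition glue_marking := forall m (phi : Box m n.+2) w, 0 < m ->
  in_obox k e phi -> is_face_word phi w -> all (allowed k e) w ->
  exists i d, [/\ const_coord phi i d, 0 < i <= n.+2, (i, d) != (k, e) &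
     marked (act (bcomp (degB n.+1 i) phi) (x i d))].

Lemma glue_map : glue_marking ->
  exists G : mmap (OBox n.+1 k e) X,
    forall m (s : OBox n.+1 k e m), G m s = glue_fun (proj1_sig s).
Proof.
move=> Hmark.
have Hnat m p (f : Box m p) (s : OBox n.+1 k e p) :
    glue_fun (proj1_sig (act f s)) = act f (glue_fun (proj1_sig s)).
  case: s => phi Hphi /=.
  have [i [d [Hg Hib Hne]]] := in_obox_const_coord Hphi.
  by rewrite (glue_funE (const_coord_comp f Hg)) // (glue_funE Hg) //
     act_compE bcompA.
have Hmk m (s : OBox n.+1 k e m) : marked s -> marked (glue_fun (proj1_sig s)).
  case: s => phi Hphi; rewrite /marked_obox /= => -[Hdeg|[Hm [w [Hw Hall]]]].
  - have [i [d [Hg Hib Hne]]] := in_obox_const_coord Hphi.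
    rewrite (glue_funE Hg) //.
    case: Hdeg => p [g [y [Hgen Hy]]].
    have -> : phi = bcomp y g by [].
    by rewrite bcompA -act_compE; exact: marked_act_degen.
  - have [i [d [Hg Hib Hne Hmk]]] := Hmark _ _ _ Hm Hphi Hw Hall.
    by rewrite (glue_funE Hg).
by exists (@MMap (OBox n.+1 k e) X (fun m s => glue_fun (proj1_sig s)) Hnat Hmk).
Qed.

End Glue.

Lemma bid_face_word n : is_face_word (bid n) [::].
Proof. by split => //= q; rewrite fidE. Qed.

Lemma open_box_filler (X : mcset) n k e (x : nat -> bool -> X n.+1) :
  comical X -> 0 < k <= n.+2 -> compatible k e x -> glue_marking k e x ->
  exists T : X n.+2, marked T /\
    forall i d, 0 < i <= n.+2 -> (i, d) != (k, e) -> act (faceB n.+1 i d) T = x i d.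
Proof.
move=> [Hlift _] Hk HC HW.
have [G HG] := glue_map HC HW.
have [g Hg] := Hlift n.+1 k e Hk G.
exists (g _ (bid n.+2)); split.
  apply: (mmark g); right; split => //; exists [::]; split => //.
  exact: bid_face_word.
move=> i d Hib Hne.
rewrite -(mnat g) /= /rep_act bcom1.
rewrite (Hg _ (exist _ (faceB n.+1 i d) (face_in_obox Hib Hne))) HG /=.
rewrite (glue_funE HC (i := i) (d := d)) //; last by move=> q; rewrite nth_face_at.
by apply: act_idE => /=; apply/ffunP => q; rewrite fcompE fidE deg_face.
Qed.

Lemma tval_face n a b (x : cube n) : 0 < a <= n.+1 ->
  tval (face n a b x) = ins (tval x) a b.
Proof.
move=> Ha; apply: (eq_from_nth (x0 := false)).
  rewrite size_tuple /ins size_cat size_take /= size_drop size_tuple.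
  by case: ifP => H; lia.
move=> k; rewrite size_tuple => Hk; rewrite nth_face_in // /ins nth_cat size_take size_tuple.
have -> : (if a.-1 < n then a.-1 else n) = a.-1 by case: ifP => H; lia.
case: ifP => H1; first by rewrite nth_take.
case: ifP => H2; first by move/eqP: H2 => ->; rewrite subnn.
have -> : k - a.-1 = (k.-1 - a.-1).+1 by lia.
by rewrite /= nth_drop; congr nth; lia.
Qed.

Lemma face_word0 n (phi : Box n n) : is_face_word phi [::] -> proj1_sig phi = fid n.
Proof. by case=> _ _ _ H; apply/ffunP => q; rewrite fidE; apply/val_inj; exact: H. Qed.

Lemma face_word1 n (phi : Box n n.+1) a b : is_face_word phi [:: (a, b)] ->
  0 < a <= n.+1 /\ proj1_sig phi = face n a b.
Proof.
case=> _ _ /= /andP [Ha _] H; split => //.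
by apply/ffunP => q; apply/val_inj; rewrite /= H tval_face.
Qed.

Lemma face_word2 n (phi : Box n n.+2) a1 b1 a2 b2 :
  is_face_word phi [:: (a1, b1); (a2, b2)] ->
  [/\ 0 < a2, a2 < a1, a1 <= n.+2 &
      proj1_sig phi = fcomp (face n.+1 a1 b1) (face n a2 b2)].
Proof.
case=> _ /= /andP [H21 _] /and3P [/andP [Ha1 Ha1'] /andP [Ha2 Ha2'] _] H.
split => //; apply/ffunP => q; apply/val_inj.
by rewrite /= H fcompE /= tval_face; [rewrite tval_face //; lia | lia].
Qed.

Lemma allowed_ne k e a b : allowed k e (a, b) -> (a, b) != (k, e).
Proof.
rewrite /allowed /= => H; apply/negP => /eqP [H1 H2]; move: H.
by rewrite H1 eqxx /= orbT.
Qed.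

(* In dimension n+2 <= 3, a positive-dimensional face of the open box has a
   normal form with one or two factors, so [glue_marking] reduces to the
   proposed faces and their allowed edges being marked. *)
Lemma low_dim_glue_marking (X : mcset) n k e (x : nat -> bool -> X n.+1) :
  n <= 1 ->
  (forall a b, 0 < a <= n.+2 -> allowed k e (a, b) -> marked (x a b)) ->
  (forall a1 b1 a2 b2, 0 < a2 -> a2 < a1 -> a1 <= n.+2 -> allowed k e (a1, b1) ->
     allowed k e (a2, b2) -> marked (act (faceB n a1.-1 b1) (x a2 b2))) ->
  glue_marking k e x.
Proof.
move=> Hn Hsq Hedge m phi w Hm Hob Hw Hallw.
have [Hsz _ _ _] := Hw.
case: w Hw Hallw Hsz => [|[a1 b1] [|[a2 b2] [|w3 w]]] Hw Hallw /= Hsz.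
- (* the whole cube is not in the open box *)
  exfalso; have Em : m = n.+2 by lia. subst m.
  have [i [d [Hg Hib Hne]]] := in_obox_const_coord Hob.
  have := Hg (nseq_tuple n.+2 (~~ d)); rewrite (face_word0 Hw) fidE.
  have -> : tval (nseq_tuple n.+2 (~~ d)) = nseq n.+2 (~~ d) by [].
  rewrite nth_nseq.
  by rewrite ifT; [case: (d) | lia].
- have Em : m = n.+1 by lia. subst m.
  have [Ha Ep] := face_word1 Hw; move: Hallw => /= /andP [Hal _].
  exists a1, b1; split => //; first by move=> q; rewrite Ep nth_face_at.
  + exact: allowed_ne.
  + rewrite act_idE; first exact: Hsq.
    by apply/ffunP => q /=; rewrite fcompE Ep deg_face fidE.
- have Em : m = n by lia. subst m.
  have [H0 H21 Ha1 Ep] := face_word2 Hw; move: Hallw => /= /and3P [Hal1 Hal2 _].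
  exists a2, b2; split; [|lia|exact: allowed_ne|].
  + move=> q; rewrite Ep fcompE nth_face_in; last lia.
    by rewrite ifT; [rewrite nth_face_at //; lia | lia].
  + rewrite (act_ext (g := faceB n a1.-1 b1)); first exact: Hedge.
    apply/ffunP => q /=.
    by rewrite fcompE Ep fcompE deg_face_lt ?deg_face //; lia.
- lia.
Qed.

(* The second lifting property: if the marking of (box^{n+2}_{k,e})' pulls
   back along the Yoneda map of T, then the missing face T d_{k,e} is marked. *)
Lemma missing_face_marked (X : mcset) n k e (T : X n.+2) :
  comical X -> 0 < k <= n.+2 ->
  (forall m (phi : Box m n.+2), marked_box' k e phi -> marked (act phi T)) ->
  marked (act (faceB n.+1 k e) T).
Proof.
move=> [_ Hlift] Hk HY.
have Hnat m p (f : Box m p) (phi : BoxM' n.+2 k e p) :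
  act (act f phi) T = act f (act phi T) by rewrite act_compE.
have [g Hg] := Hlift n.+2 k e isT Hk
  (@MMap (BoxM' n.+2 k e) X (fun m phi => act phi T) Hnat HY).
have := Hg _ (faceB n.+1 k e); rewrite /= => <-.
by apply: (mmark g); right.
Qed.

Lemma low_dim_prime_marking (X : mcset) n k e (T : X n.+2) : n <= 1 ->
  marked T ->
  (forall i d, 0 < i <= n.+2 -> (i, d) != (k, e) -> marked (act (faceB n.+1 i d) T)) ->
  (forall a1 b1 a2 b2, 0 < a2 -> a2 < a1 -> a1 <= n.+2 -> allowed k e (a1, b1) ->
     allowed k e (a2, b2) -> marked (act (faceB n a2 b2) (act (faceB n.+1 a1 b1) T))) ->
  forall m (phi : Box m n.+2), marked_box' k e phi -> marked (act phi T).
Proof.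
move=> Hn HT Hface Hedge m phi
  [[Hdeg|[Hm [w [Hw Hallw]]]] | [Hm [Hmn [i [d [Hw Hne]]]]]].
- case: Hdeg => p [g [y [Hgen Hy]]].
  have -> : phi = bcomp y g by [].
  by rewrite -act_compE; exact: marked_act_degen.
- have [Hsz _ _ _] := Hw.
  case: w Hw Hallw Hsz => [|[a1 b1] [|[a2 b2] [|w3 w]]] Hw Hallw /= Hsz.
  + have Em : m = n.+2 by lia. subst m.
    by rewrite act_idE // face_word0.
  + have Em : m = n.+1 by lia. subst m.
    have [Ha Ep] := face_word1 Hw; move: Hallw => /= /andP [Hal _].
    by rewrite (act_ext (g := faceB n.+1 a1 b1)) //; apply: Hface => //;
      exact: allowed_ne.
  + have Em : m = n by lia. subst m.
    have [H0 H21 Ha1 Ep] := face_word2 Hw; move: Hallw => /= /and3P [Hal1 Hal2 _].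
    rewrite (act_ext (g := bcomp (faceB n.+1 a1 b1) (faceB n a2 b2))) //.
    by rewrite act_comp; exact: Hedge.
  + lia.
- have Em : m = n.+1 by lia. subst m.
  have [Ha Ep] := face_word1 Hw.
  rewrite (act_ext (g := faceB n.+1 i d)) //; apply: Hface => //.
  by apply/negP => /eqP [H1 H2]; apply: Hne.
Qed.

Lemma act_to_point (X : cset) m (f g : Box m 0) (z : X 0) : act f z = act g z.
Proof.
suff -> : f = g by [].
by apply: box_eq; apply/ffunP => q; apply: cube_ext => k; lia.
Qed.

Lemma idc_end (X : mcset) e (z : X 0) : act (d1 e) (idc z) = z.
Proof. by rewrite /idc act_compE (act_to_point _ (bid 0)) act_id. Qed.

Lemma idc_hom (X : mcset) (z : X 0) : hom1 z z (idc z).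
Proof. by split; rewrite idc_end. Qed.

Lemma idc_marked (X : mcset) (z : X 0) : marked (idc z).
Proof. by apply: marked_act_degen; exact: (@dg_deg 0 1). Qed.

Lemma square_corner (X : mcset) (s : X 2) eps del :
  act (d1 eps) (act (d21 del) s) = act (d1 del) (act (d22 eps) s).
Proof. by rewrite !act_compE; apply: act_ext => /=; box_calc. Qed.

Lemma faceB_d1 (X : cset) d (s : X 1) : act (faceB 0 1 d) s = act (d1 d) s.
Proof. exact: act_ext. Qed.

Lemma faceB_d21 (X : cset) d (s : X 2) : act (faceB 1 1 d) s = act (d21 d) s.
Proof. exact: act_ext. Qed.

Lemma faceB_d22 (X : cset) d (s : X 2) : act (faceB 1 2 d) s = act (d22 d) s.
Proof. exact: act_ext. Qed.

Lemma sq_deg1 (X : mcset) (x y : X 0) (h : X 1) :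
  hom1 x y h -> marked_sq h h (idc x) (idc y).
Proof.
case=> Hx Hy; exists (act (degB 1 1) h).
split; first by apply: marked_act_degen; exact: (@dg_deg 1 1).
split.
- by rewrite act_compE act_idE //=; box_calc.
- by rewrite act_compE act_idE //=; box_calc.
- by rewrite -Hx /idc !act_compE; apply: act_ext => /=; box_calc.
- by rewrite -Hy /idc !act_compE; apply: act_ext => /=; box_calc.
Qed.

Lemma sq_deg2 (X : mcset) (x y : X 0) (h : X 1) :
  hom1 x y h -> marked_sq (idc x) (idc y) h h.
Proof.
case=> Hx Hy; exists (act (degB 1 2) h).
split; first by apply: marked_act_degen; exact: (@dg_deg 1 2).
split.
- by rewrite -Hx /idc !act_compE; apply: act_ext => /=; box_calc.
- by rewrite -Hy /idc !act_compE; apply: act_ext => /=; box_calc.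
- by rewrite act_compE act_idE //=; box_calc.
- by rewrite act_compE act_idE //=; box_calc.
Qed.

Definition max_conn : Box 2 1 := exist _ (conn 0 1 true) (@box_conn 0 1 true isT).

Lemma sq_conn (X : mcset) (y : X 0) (h : X 1) :
  act (d1 true) h = y -> marked_sq h (idc y) h (idc y).
Proof.
move=> Hy; exists (act max_conn h).
split; first by apply: marked_act_degen; exact: (@dg_conn 0 1 true).
split.
- by rewrite act_compE act_idE //=; box_calc.
- by rewrite -Hy /idc !act_compE; apply: act_ext => /=; box_calc.
- by rewrite act_compE act_idE //=; box_calc.
- by rewrite -Hy /idc !act_compE; apply: act_ext => /=; box_calc.
Qed.

Lemma sq_const (X : mcset) (z : X 0) : marked_sq (idc z) (idc z) (idc z) (idc z).
Proof. exact: sq_deg1 (idc_hom z). Qed.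

(* [Ek p q] is the edge of a 3-cube in direction k whose other two
   coordinates are (p, q); [cube3_edge E1 E2 E3 i d j dl] is then the
   (j,dl)-edge of the (i,d)-face. *)
Definition cube3_edge (X : mcset) (E1 E2 E3 : bool -> bool -> X 1)
    (i : nat) (d : bool) (j : nat) (dl : bool) : X 1 :=
  match i, j with
  | 1, 1 => E3 d dl | 1, _ => E2 d dl
  | 2, 1 => E3 dl d | 2, _ => E1 d dl
  | _, 1 => E2 dl d | _, _ => E1 dl d
  end.

Definition cube3_face_sq (X : mcset) (E1 E2 E3 : bool -> bool -> X 1) i d :=
  let S := cube3_edge E1 E2 E3 i d in
  marked_sq (S 1 false) (S 1 true) (S 2 false) (S 2 true).

Lemma cube3_edge_compat (X : mcset) (E1 E2 E3 : bool -> bool -> X 1) i j d d' :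
  0 < i -> i < j -> j <= 3 ->
  cube3_edge E1 E2 E3 i d j.-1 d' = cube3_edge E1 E2 E3 j d' i d.
Proof. by move: i j => [|[|[|[|i]]]] [|[|[|[|j]]]]. Qed.

Lemma face_face_lt j k e dl : 0 < j -> j < k -> k <= 3 ->
  fcomp (face 2 k e) (face 1 j dl) = fcomp (face 2 j dl) (face 1 k.-1 e).
Proof. by move: j k => [|[|[|[|j]]]] [|[|[|[|k]]]] //= _ _ _; box_calc. Qed.

Lemma face_face_ge j k e dl : 0 < k -> k <= j -> j <= 2 ->
  fcomp (face 2 k e) (face 1 j dl) = fcomp (face 2 j.+1 dl) (face 1 k e).
Proof. by move: j k => [|[|[|[|j]]]] [|[|[|[|k]]]] //= _ _ _; box_calc. Qed.

Lemma cube3_missing_boundary (X : mcset) (E1 E2 E3 : bool -> bool -> X 1)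
    k e (T : X 3) : 0 < k <= 3 ->
  (forall i d, 0 < i <= 3 -> (i, d) != (k, e) -> forall j dl, 0 < j <= 2 ->
     act (faceB 1 j dl) (act (faceB 2 i d) T) = cube3_edge E1 E2 E3 i d j dl) ->
  forall j dl, 0 < j <= 2 ->
    act (faceB 1 j dl) (act (faceB 2 k e) T) = cube3_edge E1 E2 E3 k e j dl.
Proof.
move=> Hk HT j dl Hj; rewrite act_compE.
have Hne i : i != k -> (i, dl) != (k, e).
  by move=> H; apply/negP => /eqP [Hi _]; rewrite Hi eqxx in H.
case: (ltnP j k) => Hjk.
- rewrite (act_ext (g := bcomp (faceB 2 j dl) (faceB 1 k.-1 e)));
    last by apply: face_face_lt; lia.
  rewrite act_comp HT ?Hne; try lia.
  by rewrite cube3_edge_compat //; lia.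
- rewrite (act_ext (g := bcomp (faceB 2 j.+1 dl) (faceB 1 k e)));
    last by apply: face_face_ge; lia.
  rewrite act_comp HT ?Hne; try lia.
  by rewrite -(cube3_edge_compat _ _ _ (i := k) (j := j.+1)) //; lia.
Qed.

Lemma cube3_missing_face (X : mcset) (E1 E2 E3 : bool -> bool -> X 1) k e :
  comical X -> 0 < k <= 3 ->
  (forall i d, 0 < i <= 3 -> (i, d) != (k, e) -> cube3_face_sq E1 E2 E3 i d) ->
  (forall a1 b1 a2 b2, 0 < a2 -> a2 < a1 -> a1 <= 3 ->
     allowed k e (a1, b1) -> allowed k e (a2, b2) ->
     marked (cube3_edge E1 E2 E3 a2 b2 a1.-1 b1)) ->
  cube3_face_sq E1 E2 E3 k e.
Proof.
move=> HX Hk Hsq Hedge.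
pose bnd i d (s : X 2) :=
  marked s /\ forall j dl, 0 < j <= 2 -> act (faceB 1 j dl) s = cube3_edge E1 E2 E3 i d j dl.
have inh : inhabited (X 2) by constructor; exact: act (degB 1 1) (E1 false false).
pose x i d := epsilon inh (bnd i d).
have Hx i d : 0 < i <= 3 -> (i, d) != (k, e) -> bnd i d (x i d).
  move=> Hi Hne; apply: epsilon_spec.
  have [s [Hs [H1 H2 H3 H4]]] := Hsq i d Hi Hne.
  exists s; split => // -[|[|[|j]]] dl //= _;
    by rewrite ?faceB_d21 ?faceB_d22; case: dl.
have HC : compatible k e x.
  move=> i j d d' Hi Hij Hj Hne Hne'.
  by rewrite (proj2 (Hx _ _ _ Hne)) ?(proj2 (Hx _ _ _ Hne')) ?cube3_edge_compat //;
    lia.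
have HW : glue_marking k e x.
  apply: low_dim_glue_marking => // [a b Ha Hal|a1 b1 a2 b2 H0 H21 Ha1 Hal1 Hal2].
  - exact: (proj1 (Hx a b Ha (allowed_ne Hal))).
  - by rewrite (proj2 (Hx _ _ _ (allowed_ne Hal2))); [exact: Hedge | lia ..].
have [T [HT HTf]] := open_box_filler HX Hk HC HW.
have Hbnd i d : 0 < i <= 3 -> (i, d) != (k, e) -> forall j dl, 0 < j <= 2 ->
    act (faceB 1 j dl) (act (faceB 2 i d) T) = cube3_edge E1 E2 E3 i d j dl.
  by move=> Hi Hne j dl Hj; rewrite HTf //; apply: (proj2 (Hx i d Hi Hne)).
have Hmk : marked (act (faceB 2 k e) T).
  apply: missing_face_marked => //; apply: low_dim_prime_marking => //.
  - by move=> i d Hi Hne; rewrite HTf //; exact: (proj1 (Hx i d Hi Hne)).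
  - move=> a1 b1 a2 b2 H0 H21 Ha1 Hal1 Hal2.
    rewrite Hbnd ?allowed_ne; try lia.
    by rewrite -(cube3_edge_compat _ _ _ b2 b1 H0 H21 Ha1); exact: Hedge.
exists (act (faceB 2 k e) T); split => //.
by rewrite -!faceB_d21 -!faceB_d22 !(cube3_missing_boundary Hk Hbnd).
Qed.

(* Consequences of the 3-cube lemma.  A normal composite of f : x -> y and
   g : y -> z is an a with a marked square (a, g, f, z s_1). *)

(* Solves the face hypotheses of [cube3_missing_face] in the applications
   below: each given face is an assumption or a degenerate square. *)
Ltac cube3_faces := move=> [|[|[|[|?]]]] [] //= _ _;
  solve [ done | assumption | exact: sq_const
        | apply: sq_conn; eassumption | apply: sq_deg1; eassumption
        | apply: sq_deg2; eassumption
        | apply: sq_conn; match goal with H : hom1 _ _ _ |- _ => exact: (proj2 H) end ].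

(* In the applications below every edge that must be marked is degenerate. *)
Ltac cube3_edges :=
  move=> [|[|[|[|?]]]] [] [|[|[|[|?]]]] [] //= _ _ _ _ _; exact: idc_marked.

Definition edges4 (X : mcset) (e00 e01 e10 e11 : X 1) := fun p q : bool =>
  if p then (if q then e11 else e10) else (if q then e01 else e00).

Lemma normal_comp_unique (X : mcset) (z : X 0) (a a' b c : X 1) : comical X ->
  act (d1 true) b = z ->
  marked_sq a b c (idc z) -> marked_sq a' b c (idc z) -> homotopic z a a'.
Proof.
move=> HX Hb H1 H2.
apply: (@cube3_missing_face X (edges4 c (idc z) (idc z) (idc z))
   (edges4 a (idc z) b (idc z)) (edges4 a' (idc z) b (idc z)) 1 false) => //.
- by cube3_faces.
- by cube3_edges.
Qed.

Lemma normal_comp_assoc (X : mcset) (y z : X 0) (f g h fg gh l : X 1) :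
  comical X -> hom1 y z h ->
  marked_sq fg g f (idc y) -> marked_sq gh h g (idc z) ->
  marked_sq l h fg (idc z) -> marked_sq l gh f (idc z).
Proof.
move=> HX Hh H1 H2 H3.
apply: (@cube3_missing_face X (edges4 f (idc z) (idc y) (idc z))
   (edges4 fg (idc z) g (idc z)) (edges4 l h gh h) 2 false) => //.
- by cube3_faces.
- by cube3_edges.
Qed.

Lemma comp_b_normal (X : mcset) (x z : X 0) (f g b a : X 1) : comical X ->
  hom1 x z a -> act (d1 true) g = z ->
  marked_sq a g f (idc z) -> marked_sq f b (idc x) g -> homotopic z b a.
Proof.
move=> HX Ha Hg H1 H2.
apply: (@cube3_missing_face X (edges4 (idc x) (idc z) g (idc z))
   (edges4 f (idc z) b (idc z)) (edges4 a g a (idc z)) 1 true) => //.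
- by cube3_faces.
- by cube3_edges.
Qed.

Lemma comp_c_normal (X : mcset) (y z : X 0) (f g c : X 1) : comical X ->
  hom1 y z g -> act (d1 true) f = y ->
  marked_sq f (idc z) c g -> marked_sq c g f (idc z).
Proof.
move=> HX Hg Hf H1.
apply: (@cube3_missing_face X (edges4 f (idc y) (idc z) (idc z))
   (edges4 c g g g) (edges4 f (idc z) (idc y) (idc z)) 3 false) => //.
- by cube3_faces.
- by cube3_edges.
Qed.

Lemma comp_d_normal (X : mcset) (x z : X 0) (f g d : X 1) : comical X ->
  hom1 x z d -> act (d1 true) g = z ->
  marked_sq (idc x) g f d -> marked_sq d g f (idc z).
Proof.
move=> HX Hd Hg H1.
apply: (@cube3_missing_face X (edges4 f d (idc z) (idc z))
   (edges4 d d g (idc z)) (edges4 (idc x) (idc z) g (idc z)) 3 false) => //.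
- by cube3_faces.
- by cube3_edges.
Qed.

(* normal composites exist: fill the open box sqcap^2_{1,0} with faces g, f, z s_1 *)
Lemma normal_comp_exists (X : mcset) (x y z : X 0) (f g : X 1) : comical X ->
  hom1 x y f -> hom1 y z g -> exists a, marked_sq a g f (idc z).
Proof.
move=> HX [Hf0 Hf1] [Hg0 Hg1].
pose sides (i : nat) (d : bool) : X 1 :=
  if i == 1 then g else if d then idc z else f.
have HC : compatible 1 false sides.
  move=> [|[|[|i]]] [|[|[|j]]] [] d' //= _ _ _ _ _; rewrite !faceB_d1 /sides /=;
    by case: d'; rewrite ?idc_end ?Hg0 ?Hg1 ?Hf1.
have HW : glue_marking 1 false sides.
  apply: low_dim_glue_marking => //.
  - by move=> [|[|[|a]]] [] //= _ _; exact: idc_marked.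
  - by move=> [|[|[|a1]]] [] [|[|[|a2]]] [].
have [T [HT HTf]] := open_box_filler HX (isT : 0 < 1 <= 2) HC HW.
exists (act (d21 false) T), T; split => //.
by split; rewrite // -?faceB_d21 -?faceB_d22 HTf.
Qed.

Lemma homotopic_refl (X : mcset) (x y : X 0) (f : X 1) :
  hom1 x y f -> homotopic y f f.
Proof. by case=> _ Hy; exact: sq_conn. Qed.

Lemma homotopic_sym (X : mcset) (x y : X 0) (f g : X 1) : comical X ->
  hom1 x y f -> homotopic y f g -> homotopic y g f.
Proof.
move=> HX Hf H.
exact: (normal_comp_unique HX (idc_end _ _) H (homotopic_refl Hf)).
Qed.

Lemma homotopic_trans (X : mcset) (y : X 0) (f g h : X 1) : comical X ->
  homotopic y f g -> homotopic y g h -> homotopic y f h.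
Proof.
move=> HX H1 H2.
exact: (normal_comp_assoc HX (idc_hom y) H1 (sq_const y) H2).
Qed.

Lemma composite_hom (X : mcset) (x y z : X 0) (f g a : X 1) :
  hom1 x y f -> hom1 y z g -> is_composite x z f g a -> hom1 x z a.
Proof.
move=> [Hf0 Hf1] [Hg0 Hg1].
case=> [|[|[]]] [s [_ [E1 E2 E3 E4]]]; split.
- by rewrite -E1 square_corner E3.
- by rewrite -E1 square_corner E4 idc_end.
- by rewrite -E2 square_corner E3 idc_end.
- by rewrite -E2 square_corner E4.
- by rewrite -E3 -square_corner E1.
- by rewrite -E3 -square_corner E2 idc_end.
- by rewrite -E4 -square_corner E1 idc_end.
- by rewrite -E4 -square_corner E2.
Qed.

Lemma composite_normal (X : mcset) (x y z : X 0) (f g a a1 : X 1) : comical X ->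
  hom1 x y f -> hom1 y z g -> hom1 x z a1 ->
  is_composite x z f g a -> marked_sq a1 g f (idc z) -> homotopic z a a1.
Proof.
move=> HX Hf Hg Ha1 Hc H1.
have Ha := composite_hom Hf Hg Hc.
case: Hc => [H|[H|[H|H]]].
- exact: (normal_comp_unique HX (proj2 Hg) H H1).
- exact: (comp_b_normal HX Ha1 (proj2 Hg) H1 H).
- exact: (normal_comp_unique HX (proj2 Hg) (comp_c_normal HX Hg (proj2 Hf) H) H1).
- exact: (normal_comp_unique HX (proj2 Hg) (comp_d_normal HX Ha (proj2 Hg) H) H1).
Qed.

Lemma normal_composite_hom (X : mcset) (x y z : X 0) (f g a : X 1) :
  hom1 x y f -> hom1 y z g -> marked_sq a g f (idc z) -> hom1 x z a.
Proof. by move=> Hf Hg H; apply: (composite_hom Hf Hg); left. Qed.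

Lemma normal_comp_wd (X : mcset) (x y z : X 0) (f f' g g' a a' : X 1) : comical X ->
  hom1 x y f -> hom1 y z g -> hom1 y z g' ->
  marked_sq a g f (idc z) -> marked_sq a' g' f' (idc z) ->
  homotopic y f f' -> homotopic z g g' -> homotopic z a a'.
Proof.
move=> HX Hf Hg Hg' H1 H2 Hff Hgg.
have Ha := normal_composite_hom Hf Hg H1.
have S1 : marked_sq a g f' (idc z).
  exact: (normal_comp_assoc HX Hg (homotopic_sym HX Hf Hff) (sq_deg1 Hg) H1).
have S2 : marked_sq a g' f' (idc z).
  exact: (normal_comp_assoc HX (idc_hom z) S1 Hgg (homotopic_refl Ha)).
exact: (normal_comp_unique HX (proj2 Hg') S2 H2).
Qed.

Lemma composite_wd (X : mcset) (x y z : X 0) (f f' g g' a a' : X 1) : comical X ->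
  hom1 x y f -> hom1 x y f' -> hom1 y z g -> hom1 y z g' ->
  homotopic y f f' -> homotopic z g g' ->
  is_composite x z f g a -> is_composite x z f' g' a' -> homotopic z a a'.
Proof.
move=> HX Hf Hf' Hg Hg' Hff Hgg Ha Ha'.
have [n Hn] := normal_comp_exists HX Hf Hg.
have [n' Hn'] := normal_comp_exists HX Hf' Hg'.
have An := normal_composite_hom Hf Hg Hn.
have An' := normal_composite_hom Hf' Hg' Hn'.
have Ea := composite_normal HX Hf Hg An Ha Hn.
have Ea' := composite_normal HX Hf' Hg' An' Ha' Hn'.
have Enn := normal_comp_wd HX Hf Hg Hg' Hn Hn' Hff Hgg.
apply: (homotopic_trans HX Ea); apply: (homotopic_trans HX Enn).
exact: (homotopic_sym HX (composite_hom Hf' Hg' Ha') Ea').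
Qed.

Lemma composite_unit_l (X : mcset) (x y : X 0) (f a : X 1) : comical X ->
  hom1 x y f -> is_composite x y (idc x) f a -> homotopic y a f.
Proof.
move=> HX Hf Ha.
exact: (composite_normal HX (idc_hom x) Hf Hf Ha (sq_deg1 Hf)).
Qed.

Lemma composite_unit_r (X : mcset) (x y : X 0) (f a : X 1) : comical X ->
  hom1 x y f -> is_composite x y f (idc y) a -> homotopic y a f.
Proof.
move=> HX Hf Ha.
exact: (composite_normal HX Hf (idc_hom y) Hf Ha (sq_conn (proj2 Hf))).
Qed.

(* (fg)h ~ f(gh): reduce to normal composites and use [normal_comp_assoc] *)
Lemma composite_assoc (X : mcset) (w x y z : X 0) (f g h fg gh l r : X 1) :
  comical X -> hom1 w x f -> hom1 x y g -> hom1 y z h ->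
  is_composite w y f g fg -> is_composite x z g h gh ->
  is_composite w z fg h l -> is_composite w z f gh r -> homotopic z l r.
Proof.
move=> HX Hf Hg Hh Hfg Hgh Hl Hr.
have Afg := composite_hom Hf Hg Hfg.
have Agh := composite_hom Hg Hh Hgh.
have [fg1 F1] := normal_comp_exists HX Hf Hg.
have [gh1 G1] := normal_comp_exists HX Hg Hh.
have Afg1 := normal_composite_hom Hf Hg F1.
have Agh1 := normal_composite_hom Hg Hh G1.
have [l1 L1] := normal_comp_exists HX Afg1 Hh.
have [r1 R1] := normal_comp_exists HX Hf Agh1.
have Ll1 : homotopic z l l1.
  apply: (composite_wd HX Afg Afg1 Hh Hh _ (homotopic_refl Hh) Hl); last by left.
  exact: (composite_normal HX Hf Hg Afg1 Hfg F1).
have Rr1 : homotopic z r r1.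
  apply: (composite_wd HX Hf Hf Agh Agh1 (homotopic_refl Hf) _ Hr); last by left.
  exact: (composite_normal HX Hg Hh Agh1 Hgh G1).
have L1R1 : homotopic z l1 r1.
  exact: (normal_comp_unique HX (proj2 Agh1) (normal_comp_assoc HX Hh F1 G1 L1) R1).
apply: (homotopic_trans HX Ll1); apply: (homotopic_trans HX L1R1).
exact: (homotopic_sym HX (composite_hom Hf Agh Hr) Rr1).
Qed.

Theorem proposition4p7 (X : mcset) : comical X ->
  (forall (x y : X 0) (f : X 1), hom1 x y f -> homotopic y f f) /\
  (forall (x y : X 0) (f g : X 1), hom1 x y f -> hom1 x y g ->
     homotopic y f g -> homotopic y g f) /\
  (forall (x y : X 0) (f g h : X 1), hom1 x y f -> hom1 x y g -> hom1 x y h ->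
     homotopic y f g -> homotopic y g h -> homotopic y f h) /\
  (forall x : X 0, hom1 x x (idc x)) /\
  (forall (x y z : X 0) (f g : X 1), hom1 x y f -> hom1 y z g ->
     exists a, is_composite x z f g a) /\
  (forall (x y z : X 0) (f g a : X 1), hom1 x y f -> hom1 y z g ->
     is_composite x z f g a -> hom1 x z a) /\
  (forall (x y z : X 0) (f f' g g' a a' : X 1),
     hom1 x y f -> hom1 x y f' -> hom1 y z g -> hom1 y z g' ->
     homotopic y f f' -> homotopic z g g' ->
     is_composite x z f g a -> is_composite x z f' g' a' ->
     homotopic z a a') /\
  (forall (x y : X 0) (f a : X 1), hom1 x y f ->
     is_composite x y (idc x) f a -> homotopic y a f) /\
  (forall (x y : X 0) (f a : X 1), hom1 x y f ->
     is_composite x y f (idc y) a -> homotopic y a f) /\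
  (forall (w x y z : X 0) (f g h fg gh l r : X 1),
     hom1 w x f -> hom1 x y g -> hom1 y z h ->
     is_composite w y f g fg -> is_composite x z g h gh ->
     is_composite w z fg h l -> is_composite w z f gh r ->
     homotopic z l r).
Proof.
move=> HX.
split; first by move=> x y f; exact: homotopic_refl.
split; first by move=> x y f g Hf _; exact: homotopic_sym HX Hf.
split; first by move=> x y f g h _ _ _; exact: homotopic_trans HX.
split; first exact: idc_hom.
split.
  by move=> x y z f g Hf Hg; have [a Ha] := normal_comp_exists HX Hf Hg; exists a; left.
split; first by move=> x y z f g a; exact: composite_hom.
split; first by move=> x y z f f' g g' a a'; exact: composite_wd HX.
split; first by move=> x y f a; exact: composite_unit_l HX.
split; first by move=> x y f a; exact: composite_unit_r HX.
by move=> w x y z f g h fg gh l r; exact: composite_assoc HX.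
Qed.
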